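(* Let $\mathcal P_1$ and $\mathcal P_2$ be two pairs of lines in the plane, the lines of $\mathcal P_1$ intersecting at ${\bf a}$ and those of $\mathcal P_2$ intersecting at ${\bf b}$, and let $A$ and $B$ be the cone matrices of the HR-cones generated by $\mathcal P_1$ and $\mathcal P_2$, respectively. Let $C=A-B$ and ${\bf c}=A{\bf a}-B{\bf b}$. If $A\neq B$, then $C$ is invertible and the rectangle locus for $\mathcal P_1$ and $\mathcal P_2$ is the set of all ${\bf x}\in\mathbb{R}^2$ such that $$({\bf x}-C^{-1}{\bf c})^TC({\bf x}-C^{-1}{\bf c})={\bf c}^TC^{-1}{\bf c}-{\bf a}^TA{\bf a}+{\bf b}^TB{\bf b}.$$
   Context: A pair of lines means two distinct lines; two pairs of lines are distinct pairs, possibly sharing one line. For a pair of distinct intersecting lines, the subset of $\mathbb{R}^3$ they generate (the set of $(x,y,\pm z)$ with $2z$ the length of a segment joining the two lines with midpoint $(x,y)$) is an HR-cone $\{(x,y,z): z^2=({\bf x}-{\bf a})^TA({\bf x}-{\bf a})\}$ with $A$ symmetric positive definite, $\det A=1$, and ${\bf a}$ the crossing point; $A$ is its cone matrix. The rectangle locus of two pairs $L_1,L_3$ and $L_2,L_4$ is the set of points $p$ that are the midpoint both of a segment joining $L_1$ and $L_3$ and of a segment joining $L_2$ and $L_4$, these two segments having equal length (equivalently, centers of possibly degenerate rectangles whose diagonals join the lines of the respective pairs). *)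

From HB Require Import structures.
From mathcomp Require Import all_boot all_order all_algebra.
Set Implicit Arguments. Unset Strict Implicit. Unset Printing Implicit Defensive.
Import Order.TTheory GRing.Theory Num.Theory.
Local Open Scope ring_scope.

(* Points of the plane R^2 are column vectors 'cV[R]_2; R is a real closed
   field (the real numbers being the intended instance). *)

Definition qform (R : rcfType) (M : 'M[R]_2) (v : 'cV[R]_2) : R :=
  ((v^T *m M *m v) 0 0).

Definition bform (R : rcfType) (u : 'cV[R]_2) (M : 'M[R]_2) (v : 'cV[R]_2) : R :=
  ((u^T *m M *m v) 0 0).

Definition sqlen (R : rcfType) (v : 'cV[R]_2) : R := (v^T *m v) 0 0.

Definition is_line (R : rcfType) (L : 'cV[R]_2 -> Prop) : Prop :=
  exists (p d : 'cV[R]_2), d != 0 /\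
    (forall x, L x <-> exists t : R, x = p + t *: d).

Definition pair_at (R : rcfType) (L L' : 'cV[R]_2 -> Prop) (a : 'cV[R]_2) : Prop :=
  [/\ is_line L, is_line L', L <> L', L a & L' a].

(* The subset of R^3 = R^2 x R generated by the pair L, L':
   the points (m, w) with w = z or w = -z, where 2z is the length of a
   segment joining L and L' with midpoint m. *)
Definition generated_set (R : rcfType) (L L' : 'cV[R]_2 -> Prop)
    (m : 'cV[R]_2) (w : R) : Prop :=
  exists p q, [/\ L p, L' q, m = 2^-1 *: (p + q) & (2 * w) ^+ 2 = sqlen (p - q)].

Definition cone_matrix (R : rcfType) (L L' : 'cV[R]_2 -> Prop)
    (a : 'cV[R]_2) (A : 'M[R]_2) : Prop :=
  [/\ A^T = A, (forall v : 'cV[R]_2, v != 0 -> 0 < qform A v), \det A = 1 &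
      forall m w, generated_set L L' m w <-> w ^+ 2 = qform A (m - a)].

Definition rect_locus (R : rcfType) (L1 L3 L2 L4 : 'cV[R]_2 -> Prop)
    (x : 'cV[R]_2) : Prop :=
  exists p1 p3 p2 p4, [/\ L1 p1, L3 p3, L2 p2 & L4 p4] /\
    [/\ x = 2^-1 *: (p1 + p3), x = 2^-1 *: (p2 + p4) &
    sqlen (p1 - p3) = sqlen (p2 - p4)].

From HB Require Import structures.
From mathcomp Require Import all_boot all_order all_algebra.
From mathcomp Require Import ring lra.
Set Implicit Arguments. Unset Strict Implicit. Unset Printing Implicit Defensive.
Import Order.TTheory GRing.Theory Num.Theory.
Local Open Scope ring_scope.

(* The rectangle locus is the projection of the intersection of the two
   HR-cones, i.e. the set where (x - a)^T A (x - a) = (x - b)^T B (x - b).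
   The quadratic parts differ by x^T C x, so completing the square with
   respect to C gives the stated conic once C is invertible.  For symmetric
   2x2 matrices, (a11 b12 - a12 b11)^2 + a11 b11 det (A - B) equals
   (a11 - b11) (b11 det A - a11 det B); when det A = det B = 1 and
   det (A - B) = 0 this makes a sum of two squares vanish, forcing A = B. *)

Lemma trmxB (V : zmodType) (m n : nat) (A B : 'M[V]_(m, n)) :
  (A - B)^T = A^T - B^T.
Proof. exact: raddfB. Qed.

Lemma mx11_entryB (V : zmodType) (P Q : 'M[V]_1) : (P - Q) 0 0 = P 0 0 - Q 0 0.
Proof. by rewrite !mxE. Qed.

Section SymmetricBilinear.

Variables (R : comPzRingType) (n : nat) (M : 'M[R]_n).
Hypothesis symM : M^T = M.

Lemma bilin_sym (u v : 'cV[R]_n) :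
  (u^T *m M *m v) 0 0 = (v^T *m M *m u) 0 0.
Proof.
transitivity ((u^T *m M *m v)^T 0 0); first by rewrite [RHS]mxE.
by rewrite !trmx_mul trmxK symM mulmxA.
Qed.

Lemma quad_subr (x a : 'cV[R]_n) :
  ((x - a)^T *m M *m (x - a)) 0 0 =
  (x^T *m M *m x) 0 0 - (x^T *m M *m a) 0 0 *+ 2 + (a^T *m M *m a) 0 0.
Proof.
rewrite trmxB !(mulmxBl, mulmxBr) !mx11_entryB (bilin_sym a x); ring.
Qed.

Lemma quad_complete_square (c y x : 'cV[R]_n) : M *m y = c ->
  (x^T *m M *m x) 0 0 - (x^T *m c) 0 0 *+ 2 =
  ((x - y)^T *m M *m (x - y)) 0 0 - (c^T *m y) 0 0.
Proof.
move=> My; rewrite quad_subr -!mulmxA My.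
have -> : y^T *m c = c^T *m y by rewrite -My trmx_mul symM mulmxA.
ring.
Qed.

End SymmetricBilinear.

Lemma quad_sub_quad (R : comPzRingType) (n : nat) (A B : 'M[R]_n)
    (x a b : 'cV[R]_n) : A^T = A -> B^T = B ->
  ((x - a)^T *m A *m (x - a)) 0 0 - ((x - b)^T *m B *m (x - b)) 0 0 =
  (x^T *m (A - B) *m x) 0 0 - (x^T *m (A *m a - B *m b)) 0 0 *+ 2
  + (a^T *m A *m a) 0 0 - (b^T *m B *m b) 0 0.
Proof.
move=> symA symB; rewrite !quad_subr // !(mulmxBl, mulmxBr) !mulmxA !mx11_entryB.
ring.
Qed.

Section TwoByTwo.

Variable R : comPzRingType.

Lemma det_mx22 (M : 'M[R]_2) : \det M = M 0 0 * M 1 1 - M 0 1 * M 1 0.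
Proof.
have lift01 : lift 0 0 = 1 :> 'I_2 by apply/val_inj.
have lift10 : lift 1 0 = 0 :> 'I_2 by apply/val_inj.
rewrite (expand_det_row _ 0) !big_ord_recl big_ord0 /cofactor !det_mx11.
rewrite !mxE lift01 lift10 /=; ring.
Qed.

Lemma ord2P (i : 'I_2) : i = 0 \/ i = 1.
Proof. by case: i => [[|[|//]]] lti; [left | right]; apply/val_inj. Qed.

Lemma mx22_eq (M N : 'M[R]_2) :
  M 0 0 = N 0 0 -> M 0 1 = N 0 1 -> M 1 0 = N 1 0 -> M 1 1 = N 1 1 -> M = N.
Proof.
move=> e00 e01 e10 e11; apply/matrixP => i j.
by case: (ord2P i) => ->; case: (ord2P j) => ->.
Qed.

Lemma sym_mx22 (M : 'M[R]_2) : M^T = M -> M 1 0 = M 0 1.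
Proof. by move/(congr1 (fun N : 'M[R]_2 => N 0 1)); rewrite mxE. Qed.

Lemma det_sub_sym_mx22 (A B : 'M[R]_2) : A^T = A -> B^T = B ->
  (A 0 0 * B 0 1 - A 0 1 * B 0 0) ^+ 2 + A 0 0 * B 0 0 * \det (A - B) =
  (A 0 0 - B 0 0) * (B 0 0 * \det A - A 0 0 * \det B).
Proof. by move=> symA symB; rewrite !det_mx22 !mxE !sym_mx22 //; ring. Qed.

End TwoByTwo.

Section UnimodularSymmetric.

Variables (R : realFieldType) (A B : 'M[R]_2).
Hypotheses (symA : A^T = A) (symB : B^T = B).
Hypotheses (detA : \det A = 1) (detB : \det B = 1).

Lemma sym_det1_det_sub_eq0 : (\det (A - B) == 0) = (A == B).
Proof.
apply/eqP/eqP => [dAB | ->]; last by rewrite subrr det0.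
have sum0 : (A 0 0 - B 0 0) ^+ 2 + (A 0 0 * B 0 1 - A 0 1 * B 0 0) ^+ 2 = 0.
  have := det_sub_sym_mx22 symA symB.
  by rewrite dAB detA detB mulr0 addr0 !mulr1 => ->; ring.
move/eqP: sum0; rewrite paddr_eq0 ?sqr_ge0 // !sqrf_eq0 !subr_eq0.
move=> /andP[/eqP e00 /eqP e01].
move: detA detB; rewrite !det_mx22 !sym_mx22 // => dA dB.
have nzA00 : A 0 0 != 0 by apply/eqP => A00; move: dA; rewrite A00; nra.
have e01' : A 0 1 = B 0 1 by apply: (mulfI nzA00); rewrite e01 e00 mulrC.
have e11 : A 1 1 = B 1 1.
  by apply: (mulfI nzA00); move: dA dB; rewrite -e00 -e01'; lra.
by apply: mx22_eq; rewrite ?sym_mx22.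
Qed.

Lemma sym_det1_sub_unitmx : A != B -> A - B \in unitmx.
Proof. by rewrite unitmxE unitfE sym_det1_det_sub_eq0. Qed.

End UnimodularSymmetric.

Section Locus.

Variable R : rcfType.

Lemma sqlen_ge0 (v : 'cV[R]_2) : 0 <= sqlen v.
Proof. by rewrite /sqlen mxE; apply: sumr_ge0 => i _; rewrite mxE -expr2 sqr_ge0. Qed.

Lemma qform_ge0 (A : 'M[R]_2) (v : 'cV[R]_2) :
  (forall u : 'cV[R]_2, u != 0 -> 0 < qform A u) -> 0 <= qform A v.
Proof.
move=> posA; have [->|nz_v] := eqVneq v 0; last exact/ltW/posA.
by rewrite /qform mulmx0 mxE.
Qed.

Lemma rect_locus_generated (L1 L3 L2 L4 : 'cV[R]_2 -> Prop) (x : 'cV[R]_2) :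
  rect_locus L1 L3 L2 L4 x <->
  exists w, generated_set L1 L3 x w /\ generated_set L2 L4 x w.
Proof.
split=> [[p1 [p3 [p2 [p4 [[h1 h3 h2 h4] [e13 e24 len]]]]]] | ].
  exists (Num.sqrt (sqlen (p1 - p3)) / 2).
  have sq : (2 * (Num.sqrt (sqlen (p1 - p3)) / 2)) ^+ 2 = sqlen (p1 - p3).
    by rewrite mulrC divfK ?pnatr_eq0 // sqr_sqrtr // sqlen_ge0.
  by split; [exists p1, p3 | exists p2, p4; rewrite -len].
move=> [w [[p1 [p3 [h1 h3 e13 len13]]] [p2 [p4 [h2 h4 e24 len24]]]]].
by exists p1, p3, p2, p4; split; split; rewrite // -len13 -len24.
Qed.

Lemma rect_locus_cone (L1 L3 L2 L4 : 'cV[R]_2 -> Prop) (a b : 'cV[R]_2)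
    (A B : 'M[R]_2) (x : 'cV[R]_2) :
  cone_matrix L1 L3 a A -> cone_matrix L2 L4 b B ->
  rect_locus L1 L3 L2 L4 x <-> qform A (x - a) = qform B (x - b).
Proof.
move=> [_ posA _ coneA] [_ _ _ coneB]; rewrite rect_locus_generated.
split=> [[w [/coneA <- /coneB <-]] // | eqAB].
have wA : Num.sqrt (qform A (x - a)) ^+ 2 = qform A (x - a).
  by rewrite sqr_sqrtr // qform_ge0.
by exists (Num.sqrt (qform A (x - a))); rewrite coneA coneB -eqAB.
Qed.

End Locus.

Theorem lemma4p5 (R : rcfType) (L1 L3 L2 L4 : 'cV[R]_2 -> Prop)
    (a b : 'cV[R]_2) (A B : 'M[R]_2) :
  pair_at L1 L3 a -> pair_at L2 L4 b ->
  cone_matrix L1 L3 a A -> cone_matrix L2 L4 b B ->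
  A != B ->
  let C := A - B in
  let c := A *m a - B *m b in
  C \in unitmx /\
  (forall x : 'cV[R]_2,
     rect_locus L1 L3 L2 L4 x <->
     qform C (x - invmx C *m c) =
       bform c (invmx C) c - qform A a + qform B b).
Proof.
(* The cone matrices alone determine the generated sets. *)
move=> _ _ coneA coneB neqAB C c.
have [symA _ detA _] := coneA; have [symB _ detB _] := coneB.
have unitC : C \in unitmx by apply: sym_det1_sub_unitmx.
have symC : C^T = C by rewrite trmxB symA symB.
have Cy : C *m (invmx C *m c) = c by rewrite mulmxA mulmxV // mul1mx.
split=> // x; rewrite (rect_locus_cone x coneA coneB).
have := quad_sub_quad x a b symA symB.
rewrite -/C -/c (quad_complete_square symC x Cy).
rewrite /qform /bform -[c^T *m _ *m c]mulmxA.
by move=> diff; split=> h; lra.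
Qed.
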